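(* Let $M$ be a centrally endo-AIP right $R$-module and $S=\mathrm{End}_R(M)$. If $S$ has finite right uniform dimension, then $S$ is a quasi-Baer ring.
   Context: For $N\le M$, $l_S(N)=\{\phi\in S:\phi(N)=0\}$. An ideal $I$ of $S$ is centrally s-unital if for every $a\in I$ there is $z\in I$ central in $S$ with $az=a$. $M$ is centrally endo-AIP if $l_S(N)$ is a centrally s-unital ideal of $S$ for every fully invariant submodule $N$ of $M$. $S$ has finite right uniform dimension if $S_S$ contains an essential submodule that is a direct sum of finitely many uniform submodules. A ring is quasi-Baer if the right annihilator of every ideal is generated, as a right ideal, by an idempotent. *)

(* A right R-module M is modelled as a left module over the
   converse ring R^c.  S = End_R(M) is represented by the predicate [End M]
   on functions M -> M, with ring operations: zero = zero map, sum = pointwise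
   sum, product phi * psi = phi \o psi (S acts on the left of M). *)
From HB Require Import structures.
From mathcomp Require Import all_boot all_order all_algebra.
Set Implicit Arguments. Unset Strict Implicit. Unset Printing Implicit Defensive.
Import GRing.Theory.
Local Open Scope ring_scope.

Section Defs.
Variables (R : pzRingType) (M : lmodType R^c).

Definition End (f : M -> M) : Prop :=
  forall (a : R^c) (x y : M), f (a *: x + y) = a *: f x + f y.

Definition zeroE : M -> M := fun _ => 0.
Definition addE (f g : M -> M) : M -> M := fun x => f x + g x.
Definition oppE (f : M -> M) : M -> M := fun x => - f x.
Definition mulE (f g : M -> M) : M -> M := fun x => f (g x).

Definition submodule (N : M -> Prop) : Prop :=
  N 0 /\ (forall x y, N x -> N y -> N (x + y)) /\
  (forall (a : R^c) x, N x -> N (a *: x)).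

Definition fully_invariant (N : M -> Prop) : Prop :=
  submodule N /\ forall phi, End phi -> forall x, N x -> N (phi x).

Definition lann (N : M -> Prop) (phi : M -> M) : Prop :=
  End phi /\ forall x, N x -> phi x = 0.

Definition rann (I : (M -> M) -> Prop) (phi : M -> M) : Prop :=
  End phi /\ forall a, I a -> mulE a phi = zeroE.

Definition addsub (I : (M -> M) -> Prop) : Prop :=
  (forall f, I f -> End f) /\ I zeroE /\
  (forall f g, I f -> I g -> I (addE f g)) /\ (forall f, I f -> I (oppE f)).

Definition right_ideal (I : (M -> M) -> Prop) : Prop :=
  addsub I /\ forall f s, I f -> End s -> I (mulE f s).

Definition ideal (I : (M -> M) -> Prop) : Prop :=
  right_ideal I /\ forall f s, I f -> End s -> I (mulE s f).

Definition central (z : M -> M) : Prop :=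
  End z /\ forall s, End s -> mulE z s = mulE s z.

Definition centrally_s_unital (I : (M -> M) -> Prop) : Prop :=
  forall a, I a -> exists z, I z /\ central z /\ mulE a z = a.

Definition centrally_endo_AIP : Prop :=
  forall N, fully_invariant N -> ideal (lann N) /\ centrally_s_unital (lann N).

Definition nonzero (I : (M -> M) -> Prop) : Prop := exists f, I f /\ f <> zeroE.

Definition uniform (U : (M -> M) -> Prop) : Prop :=
  right_ideal U /\ nonzero U /\
  forall A B, right_ideal A -> right_ideal B ->
    (forall f, A f -> U f) -> (forall f, B f -> U f) ->
    nonzero A -> nonzero B -> nonzero (fun f => A f /\ B f).

Definition essential (K : (M -> M) -> Prop) : Prop :=
  right_ideal K /\
  forall J, right_ideal J -> nonzero J -> nonzero (fun f => J f /\ K f).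

Definition sumE n (u : 'I_n -> M -> M) : M -> M := fun x => \sum_(i < n) u i x.

Definition independent n (U : 'I_n -> (M -> M) -> Prop) : Prop :=
  forall u : 'I_n -> M -> M, (forall i, U i (u i)) ->
    sumE u = zeroE -> forall i, u i = zeroE.

Definition sum_family n (U : 'I_n -> (M -> M) -> Prop) (f : M -> M) : Prop :=
  exists u : 'I_n -> M -> M, (forall i, U i (u i)) /\ f = sumE u.

Definition finite_right_uniform_dim : Prop :=
  exists n (U : 'I_n -> (M -> M) -> Prop),
    (forall i, uniform (U i)) /\ independent U /\ essential (sum_family U).

Definition quasi_Baer : Prop :=
  forall I, ideal I ->
    exists e, End e /\ mulE e e = e /\
      forall f, rann I f <-> exists s, End s /\ f = mulE e s.

End Defs.

From mathcomp Require Import all_boot all_order all_algebra.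
From Stdlib Require Import FunctionalExtensionality PropExtensionality.
From Stdlib Require Import Classical IndefiniteDescription.
Set Implicit Arguments. Unset Strict Implicit. Unset Printing Implicit Defensive.
Import GRing.Theory.
Local Open Scope ring_scope.

(* Let I be an ideal of S, J := r_S(I) and L := l_S(J).  Then L = l_S(N) for the
   fully invariant submodule N := r_M(L), so L is a centrally s-unital ideal; it
   contains I and L J = 0.  In each uniform summand U_i of the essential direct sum
   pick a_i in L ∩ U_i, nonzero if possible, and a central z in L with a_i z = a_i.
   If w in L and z w = 0, any g in w S ∩ ⊕ U_i has components u_i in L with
   z u_i = 0; as z kills u_i S and fixes a_i S, uniformity of U_i forces u_i = 0,
   so g = 0 and, by essentiality, w = 0.  A central e in L with z e = z therefore
   satisfies y (1 - e) = 0 for all y in L, and 1 - e is an idempotent generating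
   r_S(I). *)

Section EndomorphismRing.
Variables (R : pzRingType) (M : lmodType R^c).
Local Notation zero := (@zeroE _ M).
Implicit Types (a b e f g h s t u w z : M -> M) (I J K L U : (M -> M) -> Prop).

Lemma EndD f : End f -> forall x y, f (x + y) = f x + f y.
Proof. by move=> Ef x y; rewrite -[x in LHS](scale1r x) Ef scale1r. Qed.

Lemma End0 f : End f -> f 0 = 0.
Proof. by move=> Ef; apply: (addrI (f 0)); rewrite -EndD // !addr0. Qed.

Lemma EndN f : End f -> forall x, f (- x) = - f x.
Proof. by move=> Ef x; apply: (addrI (f x)); rewrite -EndD // !subrr End0. Qed.

Lemma EndB f : End f -> forall x y, f (x - y) = f x - f y.
Proof. by move=> Ef x y; rewrite EndD // EndN. Qed.

Lemma End_sum f n (F : 'I_n -> M) :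
  End f -> f (\sum_(i < n) F i) = \sum_(i < n) f (F i).
Proof. by move=> Ef; apply: (big_morph f (EndD Ef) (End0 Ef)). Qed.

Lemma End_zeroE : End zero.
Proof. by move=> a x y; rewrite /zeroE scaler0 addr0. Qed.

Lemma End_id : End (fun x : M => x).
Proof. by []. Qed.

Lemma End_addE f g : End f -> End g -> End (addE f g).
Proof. by move=> Ef Eg a x y; rewrite /addE Ef Eg scalerDr addrACA. Qed.

Lemma End_oppE f : End f -> End (oppE f).
Proof. by move=> Ef a x y; rewrite /oppE Ef opprD scalerN. Qed.

Lemma End_mulE f g : End f -> End g -> End (mulE f g).
Proof. by move=> Ef Eg a x y; rewrite /mulE Eg Ef. Qed.

Lemma mulE0 f : End f -> mulE f zero = zero.
Proof. by move=> Ef; apply: functional_extensionality => x; rewrite /mulE End0. Qed.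

Lemma mulE_sumE f n (u : 'I_n -> M -> M) :
  End f -> mulE f (sumE u) = sumE (fun i => mulE f (u i)).
Proof. by move=> Ef; apply: functional_extensionality => x; rewrite /mulE End_sum. Qed.

Definition complE e : M -> M := addE (fun x => x) (oppE e).

Lemma End_complE e : End e -> End (complE e).
Proof. by move=> Ee; apply: End_addE; [exact: End_id | exact: End_oppE]. Qed.

Lemma mulE_complE f e : End f -> mulE f (complE e) = addE f (oppE (mulE f e)).
Proof. by move=> Ef; apply: functional_extensionality => x; rewrite /mulE /addE /oppE EndB. Qed.

Lemma addE_subE_eq0 f g : addE f (oppE g) = zero -> f = g.
Proof.
move=> fg; apply: functional_extensionality => x.
by apply/eqP; rewrite -subr_eq0; apply/eqP; apply: (equal_f fg x).
Qed.

Lemma central_zeroE : central zero.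
Proof. by split=> [|s Es]; [exact: End_zeroE | rewrite mulE0]. Qed.

Lemma central_comm z s : central z -> End s -> forall x, s (z x) = z (s x).
Proof. by move=> [_ Cz] Es x; rewrite -[LHS]/(mulE s z x) -(Cz s Es). Qed.

Lemma central_addE z1 z2 : central z1 -> central z2 -> central (addE z1 z2).
Proof.
move=> C1 C2; split=> [|s Es]; first by apply: End_addE; [case: C1 | case: C2].
apply: functional_extensionality => x.
by rewrite /mulE /addE EndD // (central_comm C1 Es) (central_comm C2 Es).
Qed.

Lemma central_oppE z : central z -> central (oppE z).
Proof.
move=> Cz; split=> [|s Es]; first by apply: End_oppE; case: Cz.
by apply: functional_extensionality => x; rewrite /mulE /oppE EndN // (central_comm Cz Es).
Qed.

Lemma central_mulE z1 z2 : central z1 -> central z2 -> central (mulE z1 z2).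
Proof.
move=> C1 C2; split=> [|s Es]; first by apply: End_mulE; [case: C1 | case: C2].
by apply: functional_extensionality => x; rewrite /mulE (central_comm C1 Es) (central_comm C2 Es).
Qed.

Lemma right_ideal_End I f : right_ideal I -> I f -> End f.
Proof. by case=> [[IE _] _]; apply: IE. Qed.

Lemma right_ideal0 I : right_ideal I -> I zero.
Proof. by case=> [[_ [I0 _]] _]. Qed.

Lemma right_idealD I f g : right_ideal I -> I f -> I g -> I (addE f g).
Proof. by case=> [[_ [_ [ID _]]] _]; apply: ID. Qed.

Lemma right_idealB I f g : right_ideal I -> I f -> I g -> I (addE f (oppE g)).
Proof. by case=> [[_ [_ [ID IN]]] _] If Ig; apply/ID/IN. Qed.

Lemma right_idealMr I f s : right_ideal I -> I f -> End s -> I (mulE f s).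
Proof. by case=> _; apply. Qed.

Lemma idealMl I f s : ideal I -> I f -> End s -> I (mulE s f).
Proof. by case=> _; apply. Qed.

Definition principal w g := exists s, End s /\ g = mulE w s.

Lemma principal_right_ideal w : End w -> right_ideal (principal w).
Proof.
move=> Ew; split; [split; [|split; [|split]]|].
- by move=> _ [s [Es ->]]; apply: End_mulE.
- by exists zero; split; [exact: End_zeroE | rewrite mulE0].
- move=> _ _ [s [Es ->]] [t [Et ->]]; exists (addE s t); split; first exact: End_addE.
  by apply: functional_extensionality => x; rewrite /mulE /addE EndD.
- move=> _ [s [Es ->]]; exists (oppE s); split; first exact: End_oppE.
  by apply: functional_extensionality => x; rewrite /mulE /oppE EndN.
- by move=> _ t [s [Es ->]] Et; exists (mulE s t); split; first exact: End_mulE.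
Qed.

Lemma principal_self w : principal w w.
Proof. by exists (fun x => x); split; first exact: End_id. Qed.

Lemma principal_nonzero w : w <> zero -> nonzero (principal w).
Proof. by move=> nzw; exists w; split; first exact: principal_self. Qed.

Lemma principal_sub I w : right_ideal I -> I w -> forall g, principal w g -> I g.
Proof. by move=> RI Iw _ [s [Es ->]]; apply: right_idealMr. Qed.

Definition lannS J f := End f /\ forall g, J g -> mulE f g = zero.

Definition rannM K (x : M) := forall f, K f -> f x = 0.

Lemma lann_rannM_lannS J : lann (rannM (lannS J)) = lannS J.
Proof.
apply: functional_extensionality => f; apply: propositional_extensionality.
split=> -[Ef fN]; split=> //; last by move=> x Nx; exact: Nx f (conj Ef fN).
move=> g Jg.
by apply: functional_extensionality => x; apply: fN => h [_ hJ]; apply: (equal_f (hJ g Jg)).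
Qed.

Lemma rannM_fully_invariant K :
  (forall f, K f -> End f) -> (forall f s, K f -> End s -> K (mulE f s)) ->
  fully_invariant (rannM K).
Proof.
move=> KE KMr; split; [split; [|split]|].
- by move=> f /KE /End0.
- by move=> x y Nx Ny f Kf; rewrite EndD ?Nx ?Ny ?addr0 //; apply: KE.
- by move=> c x Nx f Kf; rewrite -[c *: x]addr0 (KE f Kf) End0 ?Nx ?scaler0 ?addr0 //; apply: KE.
- by move=> s Es x Nx f Kf; apply: (Nx (mulE f s)); apply: KMr.
Qed.

Lemma lannS_closedMr J f s :
  (forall g t, J g -> End t -> J (mulE t g)) -> lannS J f -> End s -> lannS J (mulE f s).
Proof.
move=> JMl [Ef fJ] Es; split=> [|g Jg]; first exact: End_mulE.
by apply: (fJ (mulE s g)); apply: JMl.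
Qed.

Lemma rann_closedMl I g t : right_ideal I -> rann I g -> End t -> rann I (mulE t g).
Proof.
move=> RI [Eg gI] Et; split=> [|a Ia]; first exact: End_mulE.
by apply: (gI (mulE a t)); apply: right_idealMr.
Qed.

Lemma rann_idempotent_generator I e :
  (forall a, I a -> End a) -> lannS (rann I) e ->
  (forall a, lannS (rann I) a -> mulE a e = a) ->
  End (complE e) /\ mulE (complE e) (complE e) = complE e /\
  forall f, rann I f <-> principal (complE e) f.
Proof.
move=> IE Le e_unit; have [Ee eJ] := Le.
have Ie a : I a -> lannS (rann I) a by move=> Ia; split=> [|g [_ gI]]; [exact: IE | exact: gI].
split; first exact: End_complE.
split.
  apply: functional_extensionality => x; have := equal_f (e_unit e Le) x.
  by rewrite /complE /mulE /addE /oppE EndB // => ->; rewrite subrr subr0.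
move=> f; split=> [Jf | [s [Es ->]]].
  exists f; split; first by case: Jf.
  apply: functional_extensionality => x; have := equal_f (eJ f Jf) x.
  by rewrite /mulE /complE /addE /oppE => ->; rewrite subr0.
split=> [|a Ia]; first by apply: End_mulE => //; apply: End_complE.
apply: functional_extensionality => x; have := equal_f (e_unit a (Ie a Ia)) (s x).
by rewrite /mulE /complE /addE /oppE (EndB (IE a Ia)) => ->; rewrite subrr.
Qed.

Section CentralUnits.
Variable L : (M -> M) -> Prop.
Hypotheses (idealL : ideal L) (unitalL : centrally_s_unital L).

Let rightL : right_ideal L := proj1 idealL.

(* Take [z := z1 + z2 - z1 z2] where [z2] is a central right unit for [b - b z1]. *)
Lemma central_unit_extend z1 b : L z1 -> central z1 -> L b ->
  exists z, L z /\ central z /\ mulE b z = b /\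
    forall a, End a -> mulE a z1 = a -> mulE a z = a.
Proof.
move=> Lz1 Cz1 Lb; have Eb := right_ideal_End rightL Lb.
have Lc : L (addE b (oppE (mulE b z1))).
  by apply: (right_idealB rightL) => //; apply: (right_idealMr rightL) => //; case: Cz1.
have [z2 [Lz2 [Cz2 c_z2]]] := unitalL Lc.
exists (addE (addE z1 z2) (oppE (mulE z1 z2))); split.
  apply: (right_idealB rightL); first exact: (right_idealD rightL).
  by apply: (right_idealMr rightL) => //; case: Cz2.
split; first by apply: central_addE; [exact: central_addE | apply/central_oppE/central_mulE].
split=> [|a Ea a_z1]; apply: functional_extensionality => x.
  have := equal_f c_z2 x; rewrite /mulE /addE /oppE !(EndD Eb) (EndN Eb) => c_z2x.
  by rewrite -addrA c_z2x addrC subrK.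
have := equal_f a_z1; rewrite /mulE => a_z1x.
by rewrite /addE /oppE !(EndD Ea) (EndN Ea) !a_z1x addrK.
Qed.

Lemma central_unit_family n (a : 'I_n -> M -> M) : (forall i, L (a i)) ->
  exists z, L z /\ central z /\ forall i, mulE (a i) z = a i.
Proof.
elim: n a => [|n IH] a La.
  exists zero; split; first exact: (right_ideal0 rightL).
  by split=> [|[]]; first exact: central_zeroE.
have [z1 [Lz1 [Cz1 a_z1]]] := IH (fun j => a (lift ord_max j)) (fun j => La _).
have [z [Lz [Cz [amax_z a_z]]]] := central_unit_extend Lz1 Cz1 (La ord_max).
exists z; split=> //; split=> // i; case: (unliftP ord_max i) => [j ->|->] //.
by apply: a_z => //; apply: right_ideal_End rightL _.
Qed.

End CentralUnits.

Section Decomposition.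
Variables (n : nat) (U : 'I_n -> (M -> M) -> Prop).
Hypotheses (rightU : forall i, right_ideal (U i)) (indepU : independent U).

Lemma sumE_inj (u v : 'I_n -> M -> M) : (forall i, U i (u i)) -> (forall i, U i (v i)) ->
  sumE u = sumE v -> forall i, u i = v i.
Proof.
move=> Uu Uv uv i; apply: addE_subE_eq0; move: i.
apply: indepU => [i|]; first exact: right_idealB.
apply: functional_extensionality => x; have := equal_f uv x.
by rewrite /sumE /addE /oppE sumrB => ->; rewrite subrr.
Qed.

Lemma sumE_central_kernel z (u : 'I_n -> M -> M) : central z -> (forall i, U i (u i)) ->
  mulE z (sumE u) = zero -> forall i, mulE z (u i) = zero.
Proof.
move=> Cz Uu zu; apply: indepU => [i|].
  rewrite (proj2 Cz _ (right_ideal_End (rightU i) (Uu i))).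
  by apply: right_idealMr => //; case: Cz.
by rewrite -mulE_sumE //; case: Cz.
Qed.

Lemma sumE_components_in_ideal L (u : 'I_n -> M -> M) :
  ideal L -> centrally_s_unital L -> (forall i, U i (u i)) -> L (sumE u) -> forall i, L (u i).
Proof.
move=> idealL unitalL Uu Lg; have [z [Lz [_ g_z]]] := unitalL _ Lg.
have Ez : End z := right_ideal_End (proj1 idealL) Lz.
have u_z : forall i, mulE (u i) z = u i.
  by apply: sumE_inj => // i; apply: right_idealMr.
by move=> i; rewrite -u_z; apply: idealMl idealL Lz (right_ideal_End (rightU i) (Uu i)).
Qed.

End Decomposition.

Lemma uniform_central_split U z u a : uniform U -> central z -> U u -> U a ->
  mulE z u = zero -> mulE a z = a -> u = zero \/ a = zero.
Proof.
move=> [RU [_ unifU]] Cz Uu Ua zu az.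
have [Eu Ea] := (right_ideal_End RU Uu, right_ideal_End RU Ua).
case: (classic (u = zero)) => [|nzu]; [by left | right; apply: NNPP => nza].
have [h [[[r [_ hr]] [r' [_ hr']]] nzh]] :=
  unifU _ _ (principal_right_ideal Eu) (principal_right_ideal Ea)
    (principal_sub RU Uu) (principal_sub RU Ua)
    (principal_nonzero nzu) (principal_nonzero nza).
have hz : h = mulE z h by rewrite hr' -{1}az -(proj2 Cz a Ea).
by apply: nzh; rewrite hz hr -[mulE z _]/(mulE (mulE z u) r) zu.
Qed.

Lemma essential_zero K (P : (M -> M) -> Prop) : essential K -> (forall w, P w -> End w) ->
  (forall w s, P w -> End s -> P (mulE w s)) -> (forall g, P g -> K g -> g = zero) ->
  forall w, P w -> w = zero.
Proof.
move=> [_ essK] PE PMr PK w Pw; apply: NNPP => nzw.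
have [_ [[[s [Es ->]] Kg] nzg]] :=
  essK _ (principal_right_ideal (PE w Pw)) (principal_nonzero nzw).
by apply: nzg; apply: PK => //; apply: PMr.
Qed.

Section RightUnit.
Variable L : (M -> M) -> Prop.
Variables (n : nat) (U : 'I_n -> (M -> M) -> Prop).
Hypotheses (idealL : ideal L) (unitalL : centrally_s_unital L).
Hypotheses (uniformU : forall i, uniform (U i)) (indepU : independent U).
Hypothesis essU : essential (sum_family U).

Let rightL : right_ideal L := proj1 idealL.
Let rightU i : right_ideal (U i) := proj1 (uniformU i).

Definition uniform_witnesses (a : 'I_n -> M -> M) :=
  forall i, L (a i) /\ U i (a i) /\ (a i = zero -> forall b, L b -> U i b -> b = zero).

Lemma uniform_witnesses_exist : exists a : 'I_n -> M -> M, uniform_witnesses a.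
Proof.
suff /functional_choice [a a_wit] : forall i, exists ai,
    L ai /\ U i ai /\ (ai = zero -> forall b, L b -> U i b -> b = zero).
  by exists a.
move=> i.
case: (classic (exists b, L b /\ U i b /\ b <> zero)) => [[b [Lb [Ub nzb]]] | none].
  by exists b; split=> //; split=> // /nzb.
exists zero; split; first exact: right_ideal0 rightL.
split=> [|_ b Lb Ub]; first exact: right_ideal0 (rightU i).
by apply: NNPP => nzb; apply: none; exists b.
Qed.

Lemma sum_family_central_kernel (a : 'I_n -> M -> M) z g : uniform_witnesses a -> central z ->
  (forall i, mulE (a i) z = a i) -> L g -> sum_family U g -> mulE z g = zero -> g = zero.
Proof.
move=> a_wit Cz a_z Lg [u [Uu g_u]]; rewrite {}g_u in Lg * => zg.
have Lu := sumE_components_in_ideal rightU indepU idealL unitalL Uu Lg.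
have zu := sumE_central_kernel rightU indepU Cz Uu zg.
have u0 i : u i = zero.
  have [_ [Ua a0]] := a_wit i.
  by case: (uniform_central_split (uniformU i) Cz (Uu i) Ua (zu i) (a_z i)) => // /a0; apply.
by apply: functional_extensionality => x; rewrite /sumE big1 // => i _; rewrite u0.
Qed.

Lemma ideal_right_unit : exists e, L e /\ forall y, L y -> mulE y e = y.
Proof.
have [a a_wit] := uniform_witnesses_exist.
have [z [Lz [Cz a_z]]] := central_unit_family idealL unitalL (fun i => proj1 (a_wit i)).
have [e [Le [[Ee _] z_e]]] := unitalL Lz.
exists e; split=> // y Ly; have Ey := right_ideal_End rightL Ly.
pose P w := L w /\ mulE z w = zero.
have P0 : forall w, P w -> w = zero.
  apply: (essential_zero essU) => [w [Lw _] | w s [Lw zw] Es | g [Lg zg]].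
  - exact: right_ideal_End rightL Lw.
  - by split; [apply: right_idealMr | rewrite -[mulE z _]/(mulE (mulE z w) s) zw].
  - by move=> Kg; apply: sum_family_central_kernel a_wit Cz a_z Lg Kg zg.
have : P (mulE y (complE e)).
  split; first by apply: right_idealMr => //; apply: End_complE.
  apply: functional_extensionality => x; rewrite /mulE -(central_comm Cz Ey).
  have := equal_f z_e x; rewrite /complE /mulE /addE /oppE (EndB (proj1 Cz)) => ->.
  by rewrite subrr End0.
by move/P0; rewrite mulE_complE // => /addE_subE_eq0/esym.
Qed.

End RightUnit.

End EndomorphismRing.

Theorem proposition3p6 (R : pzRingType) (M : lmodType R^c) :
  centrally_endo_AIP M -> finite_right_uniform_dim M -> quasi_Baer M.
Proof.
move=> AIP [n [U [uniformU [indepU essU]]]] I idealI.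
have rightI := proj1 idealI.
have invN : fully_invariant (rannM (lannS (rann I))).
  apply: rannM_fully_invariant => [f [] // | f s Lf Es].
  by apply: lannS_closedMr => // g t Jg Et; apply: rann_closedMl.
have [idealL unitalL] := AIP _ invN; rewrite lann_rannM_lannS in idealL unitalL.
have [e [Le e_unit]] := ideal_right_unit idealL unitalL uniformU indepU essU.
by exists (complE e); apply: rann_idempotent_generator => // a; apply: right_ideal_End rightI.
Qed.
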